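(* Let $(S,\ast)$ be an adequate partial semigroup and let $p\in\delta S$. Then $p$ is an idempotent if and only if for each $A\in p$ there is a nonempty set $T$ of functions such that (a) for all $f\in T$, $\mathrm{domain}(f)\in\omega$ and $\mathrm{range}(f)\subseteq A$; (b) for all $f\in T$, $B_f(T)\in p$; (c) for all $f\in T$ and all $x\in B_f(T)$, $B_{f^\frown x}(T)\subseteq x^{-1}B_f(T)$.
   Context: A partial semigroup is a pair $(S,\ast)$ where $\ast$ is an operation defined on a subset of $S\times S$ such that $(x\ast y)\ast z=x\ast(y\ast z)$ in the sense that if either side is defined, so is the other and they are equal. $\phi_S(s)=\{t: s\ast t\text{ defined}\}$, $\sigma_S(H)=\bigcap_{s\in H}\phi_S(s)$ for finite nonempty $H\subseteq S$; $S$ is adequate if all $\sigma_S(H)\ne\emptyset$. $\delta S=\bigcap_{x\in S}\overline{\phi_S(x)}$ is the set of ultrafilters on $S$ containing every $\phi_S(x)$, with operation $p\ast q=\{A\subseteq S:\{s: s^{-1}A\in q\}\in p\}$, where $s^{-1}A=\{t\in\phi_S(s): s\ast t\in A\}$; this makes $\delta S$ a semigroup. $\omega$ is the first infinite ordinal, each ordinal being the set of its predecessors, so $[n]=\{0,\dots,n-1\}$. For a function $f$ with domain $[n]\in\omega$ and $x\in S$, $f^\frown x=f\cup\{(n,x)\}$ (domain $[n+1]$, with $f^\frown x(n)=x$). For a set $T$ of functions with domains in $\omega$ and values in $S$, and $f\in T$, $B_f(T)=\{x: f^\frown x\in T\}$. *)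

From Stdlib Require Import List.
Import ListNotations.

(* A partial semigroup: a type S with a partial operation op : S -> S -> option S
   (op x y = None means x*y undefined).  Associativity in the strong sense:
   (x*y)*z is defined iff x*(y*z) is defined, and then they are equal. *)
Definition pbind {S : Type} (o : option S) (k : S -> option S) : option S :=
  match o with Some a => k a | None => None end.

Definition partial_assoc {S : Type} (op : S -> S -> option S) : Prop :=
  forall x y z : S,
    pbind (op x y) (fun xy => op xy z) = pbind (op y z) (fun yz => op x yz).

Definition phi {S : Type} (op : S -> S -> option S) (s : S) : S -> Prop :=
  fun t => op s t <> None.

(* sigma_S(H) for a finite nonempty H, given as a nonempty list of its elements *)
Definition sigma {S : Type} (op : S -> S -> option S) (H : list S) : S -> Prop :=
  fun t => forall s, In s H -> phi op s t.

Definition adequate {S : Type} (op : S -> S -> option S) : Prop :=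
  forall H : list S, H <> [] -> exists t, sigma op H t.

Definition subset {S : Type} (A B : S -> Prop) : Prop := forall x, A x -> B x.

Definition ultrafilter {S : Type} (p : (S -> Prop) -> Prop) : Prop :=
  p (fun _ => True) /\
  ~ p (fun _ => False) /\
  (forall A B, p A -> subset A B -> p B) /\
  (forall A B, p A -> p B -> p (fun x => A x /\ B x)) /\
  (forall A, p A \/ p (fun x => ~ A x)).

Definition in_deltaS {S : Type} (op : S -> S -> option S) (p : (S -> Prop) -> Prop) : Prop :=
  ultrafilter p /\ forall x : S, p (phi op x).

Definition sinv {S : Type} (op : S -> S -> option S) (s : S) (A : S -> Prop) : S -> Prop :=
  fun t => exists u, op s t = Some u /\ A u.

Definition ustar {S : Type} (op : S -> S -> option S) (p q : (S -> Prop) -> Prop)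
  : (S -> Prop) -> Prop :=
  fun A => p (fun s => q (sinv op s A)).

Definition idempotent {S : Type} (op : S -> S -> option S) (p : (S -> Prop) -> Prop) : Prop :=
  forall A : S -> Prop, ustar op p p A <-> p A.

(* A function with domain [n] ∈ ω and values in S is represented as the list
   [f 0; ...; f (n-1)] : list S.  Then f^x = f ++ [x]. *)
Definition snoc {S : Type} (f : list S) (x : S) : list S := f ++ [x].

Definition Bset {S : Type} (T : list S -> Prop) (f : list S) : S -> Prop :=
  fun x => T (snoc f x).

(* Sufficiency: if f is in T, every x in B_f(T) has B_(f^x)(T) in p and every y there
   gives x*y in B_f(T), hence in A; so B_f(T) is a set in p of points x with x^{-1}A in p,
   i.e. A is in p*p.  Thus p is contained in p*p, and an ultrafilter contained in a proper
   filter equals it.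
   Necessity: for p = p*p and A in p put star A = {x in A : x^{-1}A in p}; then star A is
   in p and, by associativity, x^{-1}(star A) is in p for x in star A.  Label the root of a
   tree by A and the child f^x of a node labelled D by star D /\ x^{-1}(star D), where the
   children of that node are the points of star D; conditions (a)-(c) then hold by
   construction. *)

From Stdlib Require Import List.
Import ListNotations.

Section Ultrafilters.

Variable S : Type.
Variable p : (S -> Prop) -> Prop.
Hypothesis Hp : ultrafilter p.

Lemma uf_superset A B : p A -> subset A B -> p B.
Proof. destruct Hp as (_ & _ & H & _). eauto. Qed.

Lemma uf_cap A B : p A -> p B -> p (fun x => A x /\ B x).
Proof. destruct Hp as (_ & _ & _ & H & _). eauto. Qed.

Lemma uf_not_empty : ~ p (fun _ => False).
Proof. destruct Hp as (_ & H & _). exact H. Qed.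

Lemma uf_maximal (F : (S -> Prop) -> Prop) :
  (forall A B, F A -> subset A B -> F B) ->
  (forall A B, F A -> F B -> F (fun x => A x /\ B x)) ->
  ~ F (fun _ => False) ->
  (forall A, p A -> F A) ->
  forall A, F A -> p A.
Proof.
  intros F_superset F_cap F_proper p_sub_F A FA.
  destruct Hp as (_ & _ & _ & _ & compl).
  destruct (compl A) as [pA | pnA]; [exact pA |].
  exfalso; apply F_proper.
  apply (F_superset _ _ (F_cap _ _ FA (p_sub_F _ pnA))).
  intros x [Ax nAx]. exact (nAx Ax).
Qed.

End Ultrafilters.

Section Product.

Variable S : Type.
Variable op : S -> S -> option S.

Lemma sinv_mono s A B : subset A B -> subset (sinv op s A) (sinv op s B).
Proof. intros AB t (u & E & Au). exists u; auto. Qed.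

Lemma sinv_cap s A B t :
  sinv op s A t -> sinv op s B t -> sinv op s (fun x => A x /\ B x) t.
Proof.
  intros (u & Eu & Au) (v & Ev & Bv).
  rewrite Eu in Ev. injection Ev as <-.
  exists u; auto.
Qed.

Variables p q : (S -> Prop) -> Prop.
Hypotheses (Hp : ultrafilter p) (Hq : ultrafilter q).

Lemma ustar_superset A B : ustar op p q A -> subset A B -> ustar op p q B.
Proof.
  intros HA AB. apply (uf_superset _ _ Hp _ _ HA).
  intros s Hs. exact (uf_superset _ _ Hq _ _ Hs (sinv_mono s A B AB)).
Qed.

Lemma ustar_cap A B :
  ustar op p q A -> ustar op p q B -> ustar op p q (fun x => A x /\ B x).
Proof.
  intros HA HB. apply (uf_superset _ _ Hp _ _ (uf_cap _ _ Hp _ _ HA HB)).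
  intros s [HsA HsB]. apply (uf_superset _ _ Hq _ _ (uf_cap _ _ Hq _ _ HsA HsB)).
  intros t [HtA HtB]. exact (sinv_cap s A B t HtA HtB).
Qed.

Lemma ustar_not_empty : ~ ustar op p q (fun _ => False).
Proof.
  intros H. apply (uf_not_empty _ _ Hp), (uf_superset _ _ Hp _ _ H).
  intros s Hs. apply (uf_not_empty _ _ Hq), (uf_superset _ _ Hq _ _ Hs).
  intros t (u & _ & []).
Qed.

End Product.

Lemma idempotent_of_sub_ustar (S : Type) (op : S -> S -> option S) p :
  ultrafilter p -> (forall A, p A -> ustar op p p A) -> idempotent op p.
Proof.
  intros Hp p_sub A. split; [| apply p_sub].
  apply (uf_maximal _ _ Hp (ustar op p p)); auto.
  - apply ustar_superset; assumption.
  - apply ustar_cap; assumption.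
  - apply ustar_not_empty; assumption.
Qed.

Definition tree_for {S : Type} (op : S -> S -> option S) (p : (S -> Prop) -> Prop)
    (A : S -> Prop) (T : list S -> Prop) : Prop :=
  (exists f, T f) /\
  (forall f, T f -> forall y, In y f -> A y) /\
  (forall f, T f -> p (Bset T f)) /\
  (forall f, T f -> forall x, Bset T f x ->
     subset (Bset T (snoc f x)) (sinv op x (Bset T f))).

Lemma Bset_sub_range S (T : list S -> Prop) A f :
  (forall g, T g -> forall y, In y g -> A y) -> subset (Bset T f) A.
Proof.
  intros range x Tfx. apply (range _ Tfx).
  apply in_or_app. right. left. reflexivity.
Qed.

Lemma ustar_of_tree S (op : S -> S -> option S) p A T :
  ultrafilter p -> tree_for op p A T -> ustar op p p A.
Proof.
  intros Hp ([f Tf] & range & B_in_p & B_snoc).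
  apply (uf_superset _ _ Hp _ _ (B_in_p f Tf)). intros x Bx.
  apply (uf_superset _ _ Hp _ _ (B_in_p _ Bx)). intros y Bxy.
  apply (sinv_mono _ _ _ _ _ (Bset_sub_range _ _ _ f range)).
  exact (B_snoc f Tf x Bx y Bxy).
Qed.

Section TreeConstruction.

Variable S : Type.
Variable op : S -> S -> option S.
Variable p : (S -> Prop) -> Prop.
Hypothesis Hp : ultrafilter p.
Hypothesis Hassoc : partial_assoc op.
Hypothesis Hid : idempotent op p.

Definition star (D : S -> Prop) : S -> Prop := fun x => D x /\ p (sinv op x D).

Lemma star_in D : p D -> p (star D).
Proof. intros HD. apply (uf_cap _ _ Hp); [exact HD | apply Hid, HD]. Qed.

(* For y in star (x^{-1}D), associativity gives y^{-1}(x^{-1}D) = (x*y)^{-1}D, so x*y is in star D. *)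
Lemma sinv_star_in D x : p D -> star D x -> p (sinv op x (star D)).
Proof.
  intros HD [_ HxD].
  apply (uf_superset _ _ Hp _ _ (star_in _ HxD)).
  intros y [(u & Exy & Du) HyxD]. exists u. split; [exact Exy |]. split; [exact Du |].
  apply (uf_superset _ _ Hp _ _ HyxD).
  intros z (w & Eyz & v & Exw & Dv). exists v. split; [| exact Dv].
  pose proof (Hassoc x y z) as E. rewrite Exy, Eyz in E. simpl in E. congruence.
Qed.

Variable A : S -> Prop.
Hypothesis HA : p A.

Definition label (f : list S) : S -> Prop :=
  fold_left (fun D x => fun y => star D y /\ sinv op x (star D) y) f A.

Lemma label_snoc f x :
  label (snoc f x) = fun y => star (label f) y /\ sinv op x (star (label f)) y.
Proof. unfold label, snoc. rewrite fold_left_app. reflexivity. Qed.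

Inductive tree : list S -> Prop :=
| tree_nil : tree []
| tree_snoc f x : tree f -> star (label f) x -> tree (snoc f x).

Lemma Bset_tree f x : Bset tree f x <-> tree f /\ star (label f) x.
Proof.
  split.
  - intros H. inversion H as [| g y Tg Hy E].
    + destruct f; discriminate.
    + apply app_inj_tail in E as [-> ->]. auto.
  - intros [Tf Hx]. constructor; assumption.
Qed.

Lemma label_in_sub f : tree f -> p (label f) /\ subset (label f) A.
Proof.
  induction 1 as [| f x _ [Hf fA] Hx].
  - split; [exact HA | intros y Ay; exact Ay].
  - rewrite label_snoc. split.
    + apply (uf_cap _ _ Hp); [apply star_in | apply sinv_star_in]; assumption.
    + intros y [[Hy _] _]. exact (fA y Hy).
Qed.

Lemma tree_range f : tree f -> forall y, In y f -> A y.
Proof.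
  induction 1 as [| f x Tf IH [Hx _]]; [intros y [] |].
  intros y Hy. apply in_app_or in Hy as [Hy | [<- | []]]; [exact (IH y Hy) |].
  exact (proj2 (label_in_sub f Tf) x Hx).
Qed.

Lemma tree_for_tree : tree_for op p A tree.
Proof.
  split; [exists []; constructor |]. split; [exact tree_range |]. split.
  - intros f Tf. apply (uf_superset _ _ Hp _ _ (star_in _ (proj1 (label_in_sub f Tf)))).
    intros x Hx. apply Bset_tree. auto.
  - intros f Tf x Hx y Hy.
    apply Bset_tree in Hx as [_ Hx]. apply Bset_tree in Hy as [_ [Hy _]].
    rewrite label_snoc in Hy. destruct Hy as [_ Hy].
    apply (sinv_mono _ _ _ _ _ (fun z Hz => proj2 (Bset_tree f z) (conj Tf Hz)) _ Hy).
Qed.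

End TreeConstruction.

Theorem lemma4p3 (S : Type) (op : S -> S -> option S)
  (Hassoc : partial_assoc op) (Hadeq : adequate op)
  (p : (S -> Prop) -> Prop) (Hp : in_deltaS op p) :
  idempotent op p <->
  (forall A : S -> Prop, p A ->
     exists T : list S -> Prop,
       (exists f, T f) /\
       (forall f, T f -> forall y, In y f -> A y) /\
       (forall f, T f -> p (Bset T f)) /\
       (forall f, T f -> forall x, Bset T f x ->
          subset (Bset T (snoc f x)) (sinv op x (Bset T f)))).
Proof.
  destruct Hp as [Hu _].
  split.
  - intros Hid A HA. exists (tree S op p A). exact (tree_for_tree S op p Hu Hassoc Hid A HA).
  - intros Htrees. apply idempotent_of_sub_ustar; [exact Hu |].
    intros A HA. destruct (Htrees A HA) as [T HT].
    exact (ustar_of_tree S op p A T Hu HT).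
Qed.
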